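(* Let $\mathcal C\subseteq V$ be a subspace of dimension $K=|\mathcal C|$ with orthogonal projector $P$. Then: (1) $A_i(P,P)\ge0$ for all $i$; (2) $\sum_iA_i(P,P)=K$; (3) $\sum_iB_i(P,P)=K^2$; (4) if some sector $\mathcal E_0=\mathrm{span}\{I\}$, then $A_0(P,P)=K^2/\dim V$ and $B_0(P,P)=K/\dim V$; (5) for every $i$, $A_i(P,P)\le K\,B_i(P,P)$, with equality if and only if $\mathcal C$ detects every error in $\mathcal E_i$.
   Context: Let $V$ be a finite-dimensional complex Hilbert space and $\mathcal L(V)$ the space of linear operators on $V$, equipped with the Hilbert–Schmidt inner product $\langle X_1,X_2\rangle=\mathrm{Tr}(X_1^\dagger X_2)$. Fix an orthogonal decomposition $\mathcal L(V)=\bigoplus_{i\in I}\mathcal E_i$. For each $i$, let $\Pi_i$ be the orthogonal projector of $\mathcal L(V)$ onto $\mathcal E_i$, fix an orthonormal basis $\mathcal B_i$ of $\mathcal E_i$, and let $\mathrm{Twirl}_i(X)=\sum_{E\in\mathcal B_i}E^\dagger XE$. Define $A_i(X_1,X_2)=\langle X_1,\Pi_i(X_2)\rangle$ and $B_i(X_1,X_2)=\langle X_1,\mathrm{Twirl}_i(X_2)\rangle$. A subspace $\mathcal C\subseteq V$ with orthogonal projector $P$ detects every error in a subspace $\mathcal F\subseteq\mathcal L(V)$ if for every $E\in\mathcal F$ there is a scalar $c_E\in\mathbb C$ with $PEP=c_EP$. *)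

From HB Require Import structures.
From mathcomp Require Import all_boot all_order all_algebra algC.
Set Implicit Arguments. Unset Strict Implicit. Unset Printing Implicit Defensive.
Import Order.TTheory GRing.Theory Num.Theory.
Local Open Scope ring_scope.

(* V = C^n (complex numbers modelled by algC), L(V) = 'M[algC]_n. *)

Definition adj (n : nat) (X : 'M[algC]_n) : 'M[algC]_n := (map_mx Num.conj X)^T.

Definition hs (n : nat) (X1 X2 : 'M[algC]_n) : algC := \tr (adj X1 *m X2).

(* An orthogonal decomposition L(V) = (+)_{i in I} E_i together with an
   orthonormal basis B_i of each E_i is encoded by a finite index type J,
   a labelling sector : J -> I and matrices e : J -> 'M_n:
   B_i = { e j | sector j = i },  E_i = span B_i. *)
Definition is_decomposition (n : nat) (I J : finType) (sector : J -> I)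
    (e : J -> 'M[algC]_n) : Prop :=
  (forall j k : J, hs (e j) (e k) = (j == k)%:R) /\
  (forall X : 'M[algC]_n, exists c : J -> algC, X = \sum_j c j *: e j).

Definition in_sector (n : nat) (I J : finType) (sector : J -> I)
    (e : J -> 'M[algC]_n) (i : I) (E : 'M[algC]_n) : Prop :=
  exists c : J -> algC, E = \sum_(j | sector j == i) c j *: e j.

Definition Proj (n : nat) (I J : finType) (sector : J -> I)
    (e : J -> 'M[algC]_n) (i : I) (X : 'M[algC]_n) : 'M[algC]_n :=
  \sum_(j | sector j == i) hs (e j) X *: e j.

Definition Twirl (n : nat) (I J : finType) (sector : J -> I)
    (e : J -> 'M[algC]_n) (i : I) (X : 'M[algC]_n) : 'M[algC]_n :=
  \sum_(j | sector j == i) (adj (e j) *m X *m e j).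

Definition Aenum (n : nat) (I J : finType) (sector : J -> I)
    (e : J -> 'M[algC]_n) (i : I) (X1 X2 : 'M[algC]_n) : algC :=
  hs X1 (Proj sector e i X2).

Definition Benum (n : nat) (I J : finType) (sector : J -> I)
    (e : J -> 'M[algC]_n) (i : I) (X1 X2 : 'M[algC]_n) : algC :=
  hs X1 (Twirl sector e i X2).

(* P is an orthogonal projector (onto the code space C = range P) *)
Definition orth_projector (n : nat) (P : 'M[algC]_n) : Prop :=
  P *m P = P /\ adj P = P.

Definition detects (n : nat) (P : 'M[algC]_n) (F : 'M[algC]_n -> Prop) : Prop :=
  forall E, F E -> exists c : algC, P *m E *m P = c *: P.

From HB Require Import structures.
From mathcomp Require Import all_boot all_order all_algebra algC.
From mathcomp Require Import ring.

Set Implicit Arguments.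
Unset Strict Implicit.
Unset Printing Implicit Defensive.
Import Order.TTheory GRing.Theory Num.Theory.
Local Open Scope ring_scope.

(* Expanding P in the orthonormal basis gives A_i(P,P) = sum_j |<P, e_j>|^2
   over the basis e_j of E_i, and the completeness relation of the basis
   makes the total twirl X |-> Tr X * I; this gives (1)-(3).  As P is a
   projector, <P, e_j> = <P, P e_j P> and B_i(P,P) = sum_j <P e_j P, P e_j P>,
   so (5) is the Cauchy-Schwarz inequality |<P, Y>|^2 <= <P, P> <Y, Y> with
   <P, P> = K, applied termwise to Y = P e_j P: equality holds iff every
   P e_j P is a multiple of P.  For E_0 = span{I}, every basis element is a
   multiple c I with |c|^2 summing to 1/dim V, so Pi_0 and Twirl_0 are
   explicit and (4) is a computation. *)

Section HilbertSchmidt.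
Variable n : nat.
Implicit Types X Y Z : 'M[algC]_n.

Lemma adjE X i j : adj X i j = (X j i)^*.
Proof. by rewrite /adj !mxE. Qed.

Lemma adjM X Y : adj (X *m Y) = adj Y *m adj X.
Proof. by rewrite /adj map_mxM trmx_mul. Qed.

Lemma adj1 : adj (1%:M : 'M[algC]_n) = 1%:M.
Proof. by rewrite /adj map_mx1 trmx1. Qed.

Lemma adjZ a X : adj (a *: X) = a^* *: adj X.
Proof. by rewrite /adj map_mxZ linearZ. Qed.

Lemma hsE X Y : hs X Y = \sum_i \sum_j (X i j)^* * Y i j.
Proof.
rewrite /hs /mxtrace exchange_big; apply: eq_bigr => i _.
by rewrite mxE; apply: eq_bigr => j _; rewrite adjE.
Qed.

Lemma hsDr X Y Z : hs X (Y + Z) = hs X Y + hs X Z.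
Proof. by rewrite /hs mulmxDr mxtraceD. Qed.

Lemma hs0r X : hs X 0 = 0.
Proof. by rewrite /hs mulmx0 mxtrace0. Qed.

Lemma hsZr X a Y : hs X (a *: Y) = a * hs X Y.
Proof. by rewrite /hs -scalemxAr mxtraceZ. Qed.

Lemma hsBr X Y Z : hs X (Y - Z) = hs X Y - hs X Z.
Proof. by rewrite hsDr -scaleN1r hsZr mulN1r. Qed.

Lemma hs_sumr X (T : Type) (r : seq T) (Q : pred T) (F : T -> 'M[algC]_n) :
  hs X (\sum_(i <- r | Q i) F i) = \sum_(i <- r | Q i) hs X (F i).
Proof. exact: (big_morph (hs X) (hsDr X) (hs0r X)). Qed.

Lemma hs1r X : hs X 1%:M = (\tr X)^*.
Proof.
rewrite /hs mulmx1 /adj mxtrace_tr /mxtrace rmorph_sum.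
by apply: eq_bigr => i _; rewrite mxE.
Qed.

Lemma hsC X Y : hs Y X = (hs X Y)^*.
Proof.
rewrite !hsE rmorph_sum; apply: eq_bigr => i _; rewrite rmorph_sum.
by apply: eq_bigr => j _; rewrite rmorphM /= conjCK mulrC.
Qed.

Lemma hsZl X a Y : hs (a *: X) Y = a^* * hs X Y.
Proof. by rewrite hsC hsZr rmorphM /= -hsC. Qed.

Lemma hsBl X Y Z : hs (X - Y) Z = hs X Z - hs Y Z.
Proof. by rewrite hsC hsBr rmorphB /= -!hsC. Qed.

Lemma hs_ge0 X : 0 <= hs X X.
Proof.
rewrite hsE; apply: sumr_ge0 => i _; apply: sumr_ge0 => j _.
by rewrite mulrC mul_conjC_ge0.
Qed.

Lemma hs_eq0 X : hs X X = 0 -> X = 0.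
Proof.
have entry_ge0 i j : 0 <= (X i j)^* * X i j by rewrite mulrC mul_conjC_ge0.
rewrite hsE => X0; apply/matrixP => i j; rewrite mxE.
have row_ge0 i' : 0 <= \sum_j (X i' j)^* * X i' j.
  by apply: sumr_ge0 => j' _; apply: entry_ge0.
have row0 := psumr_eq0P (fun i' _ => row_ge0 i') X0 (i := i) isT.
have := psumr_eq0P (fun j' _ => entry_ge0 i j') row0 (i := j) isT.
by move/eqP; rewrite mulrC mul_conjC_eq0 => /eqP.
Qed.

Lemma hs_conjr X : (hs X X)^* = hs X X.
Proof. exact/geC0_conj/hs_ge0. Qed.

Lemma hs_residual X Y : hs X X != 0 ->
  let Y' := Y - (hs X Y / hs X X) *: X in
  hs Y' Y' = hs Y Y - `|hs X Y| ^+ 2 / hs X X.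
Proof.
move=> nzX /=; rewrite hsBl !hsBr !hsZl !hsZr (hsC X Y) normCKC.
rewrite rmorphM /= fmorphV /= hs_conjr.
by field.
Qed.

Lemma hs_Cauchy_Schwarz X Y : `|hs X Y| ^+ 2 <= hs X X * hs Y Y.
Proof.
have [X0|nzX] := eqVneq (hs X X) 0.
  by rewrite X0 mul0r (hs_eq0 X0) hsC hs0r rmorph0 normr0 expr0n.
have Xgt0 : 0 < hs X X by rewrite lt_def nzX hs_ge0.
have := hs_ge0 (Y - (hs X Y / hs X X) *: X); rewrite hs_residual // subr_ge0.
by rewrite ler_pdivrMr // mulrC.
Qed.

Lemma hs_Cauchy_Schwarz_eqP X Y : X != 0 ->
  `|hs X Y| ^+ 2 = hs X X * hs Y Y <-> exists c, Y = c *: X.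
Proof.
move=> nzX; have nzXX : hs X X != 0 by apply: contra_neq nzX; apply: hs_eq0.
split=> [eqXY | [c ->]].
  exists (hs X Y / hs X X); apply/eqP; rewrite -subr_eq0; apply/eqP/hs_eq0.
  by rewrite hs_residual // eqXY mulrAC divff // mul1r subrr.
rewrite hsZl !hsZr normrM exprMn !normCKC hs_conjr.
by ring.
Qed.

Lemma hs_Cauchy_Schwarz_sandwichP X Y :
  let Y' := X *m Y *m X in
  `|hs X Y'| ^+ 2 = hs X X * hs Y' Y' <-> exists c, Y' = c *: X.
Proof.
have [-> | nzX] /= := eqVneq X 0; last exact: hs_Cauchy_Schwarz_eqP.
rewrite mulmx0 hs0r normr0 expr0n /= mul0r.
by split=> // _; exists 0; rewrite scaler0.
Qed.

Lemma mxtrace_idem X : X *m X = X -> \tr X = (\rank X)%:R.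
Proof.
move=> XX; have [B BC] := row_fullP (col_base_full X).
set C := col_base X in BC *; set R := row_base X.
have defX : C *m R = X := mulmx_base X.
have Rfree : row_free R := row_base_free X.
clearbody C R.
have RCR : R *m C *m R = R.
  have CRCR : C *m R *m (C *m R) = C *m R by rewrite defX.
  by have := congr1 (mulmx B) CRCR; rewrite !mulmxA BC !mul1mx.
have RC : R *m C = 1%:M.
  by apply: (row_free_inj Rfree); rewrite mul1mx.
by rewrite -[in \tr X]defX mxtrace_mulC RC mxtrace1.
Qed.

End HilbertSchmidt.

Lemma sum_sector (V : nmodType) (I J : finType) (sector : J -> I) (F : J -> V) :
  \sum_i \sum_(j | sector j == i) F j = \sum_j F j.
Proof. by rewrite [RHS](partition_big sector xpredT). Qed.

Section Decomposition.
Variables (n : nat) (I J : finType) (sector : J -> I) (e : J -> 'M[algC]_n).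
Implicit Types X Y : 'M[algC]_n.

Lemma Aenum_diag i X :
  Aenum sector e i X X = \sum_(j | sector j == i) `|hs X (e j)| ^+ 2.
Proof.
rewrite /Aenum /Proj hs_sumr; apply: eq_bigr => j _.
by rewrite hsZr (hsC X (e j)) normCKC.
Qed.

Lemma Aenum_ge0 i X : 0 <= Aenum sector e i X X.
Proof. by rewrite Aenum_diag; apply: sumr_ge0 => j _; apply: exprn_ge0. Qed.

Lemma basis_in_sector j : in_sector sector e (sector j) (e j).
Proof.
exists (fun k => (k == j)%:R).
rewrite (bigD1 j) //= eqxx scale1r big1 ?addr0 // => k /andP [_ kj].
by rewrite (negPf kj) scale0r.
Qed.

Lemma detects_sectorP i P :
  detects P (in_sector sector e i) <->
  (forall j, sector j == i -> exists c, P *m e j *m P = c *: P).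
Proof.
split=> [det j /eqP sj | scal E [c ->]].
  by apply: det; rewrite -sj; apply: basis_in_sector.
have /fin_all_exists [d Hd] : forall j, exists d : algC,
    sector j == i -> P *m e j *m P = d *: P.
  move=> j; have [/scal [d Hd] | _] := boolP (sector j == i); first by exists d.
  by exists 0.
exists (\sum_(j | sector j == i) c j * d j).
rewrite mulmx_sumr mulmx_suml scaler_suml; apply: eq_bigr => j sj.
by rewrite -scalemxAr -scalemxAl Hd // scalerA.
Qed.

Hypothesis decomp : is_decomposition sector e.

Lemma hs_basis j k : hs (e j) (e k) = (j == k)%:R.
Proof. by case: decomp. Qed.

Lemma hs_basis_sum j (Q : pred J) (c : J -> algC) :
  hs (e j) (\sum_(k | Q k) c k *: e k) = (Q j)%:R * c j.
Proof.
rewrite hs_sumr big_mkcond (bigD1 j) //= big1 ?addr0 => [|k kj]; last first.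
  by case: (Q k); rewrite // hsZr hs_basis eq_sym (negPf kj) mulr0.
by case: (Q j); rewrite ?mul0r // hsZr hs_basis eqxx mulr1 mul1r.
Qed.

Lemma basis_expansion X : X = \sum_j hs (e j) X *: e j.
Proof.
case: decomp => _ /(_ X) [c ->]; apply: eq_bigr => j _.
by rewrite hs_basis_sum mul1r.
Qed.

Lemma Proj_in_sector i E : in_sector sector e i E -> Proj sector e i E = E.
Proof.
case=> c ->; apply: eq_bigr => j sj.
by rewrite hs_basis_sum sj mul1r.
Qed.

Lemma sum_Proj X : \sum_i Proj sector e i X = X.
Proof. by rewrite sum_sector -basis_expansion. Qed.

(* The (a,b) entry of the expansion of the matrix unit delta_mx c d. *)
Lemma basis_completeness (a b c d : 'I_n) :
  \sum_j (e j c d)^* * e j a b = ((a == c) && (b == d))%:R.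
Proof.
have := congr1 (fun M : 'M[algC]_n => M a b) (basis_expansion (delta_mx c d)).
rewrite /= summxE mxE => ->; apply: eq_bigr => j _; rewrite mxE; congr (_ * _).
rewrite hsE (bigD1 c) //= (bigD1 d) //= mxE !eqxx mulr1.
rewrite big1 => [|b' b'd]; last by rewrite mxE eqxx (negPf b'd) mulr0.
rewrite big1 ?addr0 // => a' a'c.
by rewrite big1 // => b' _; rewrite mxE (negPf a'c) mulr0.
Qed.

Lemma sum_Twirl X : \sum_i Twirl sector e i X = \tr X *: 1%:M.
Proof.
rewrite sum_sector; apply/matrixP => a b; rewrite summxE !mxE.
transitivity (\sum_j \sum_d \sum_c (e j c a)^* * X c d * e j d b).
  apply: eq_bigr => j _; rewrite mxE; apply: eq_bigr => d _.
  by rewrite mxE mulr_suml; apply: eq_bigr => c _; rewrite adjE.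
rewrite exchange_big; under eq_bigr do rewrite exchange_big; rewrite exchange_big.
transitivity (\sum_c \sum_d X c d * ((d == c) && (b == a))%:R).
  apply: eq_bigr => c _; apply: eq_bigr => d _.
  rewrite -basis_completeness mulr_sumr; apply: eq_bigr => j _.
  by rewrite mulrCA mulrA.
rewrite /mxtrace mulr_suml; apply: eq_bigr => c _.
rewrite (bigD1 c) //= eqxx big1 ?addr0 => [|d dc]; last first.
  by rewrite (negPf dc) mulr0.
by rewrite eq_sym; case: (a == b); rewrite ?mulr1 ?mulr0.
Qed.

Lemma sum_Aenum X : \sum_i Aenum sector e i X X = hs X X.
Proof. by rewrite -hs_sumr sum_Proj. Qed.

Lemma sum_Benum X : \sum_i Benum sector e i X X = `|\tr X| ^+ 2.
Proof. by rewrite -hs_sumr sum_Twirl hsZr hs1r normCK. Qed.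

Section IdentitySector.
Variable i0 : I.
Hypothesis identity_sector :
  forall E, in_sector sector e i0 E <-> exists c : algC, E = c *: 1%:M.
Variable o : 'I_n.

Lemma identity_sector_scalar j : sector j == i0 -> e j = e j o o *: 1%:M.
Proof.
move=> /eqP sj; have := basis_in_sector j; rewrite sj => /identity_sector [c ec].
by rewrite ec !mxE eqxx mulr1.
Qed.

Let w := \sum_(j | sector j == i0) `|e j o o| ^+ 2.

Lemma Proj_identity_sectorE X : Proj sector e i0 X = (w * \tr X) *: 1%:M.
Proof.
rewrite /Proj /w mulr_suml scaler_suml; apply: eq_bigr => j sj.
rewrite {1 2}(identity_sector_scalar sj) hsZl /hs adj1 mul1mx scalerA normCKC.
by rewrite mulrAC.
Qed.

Lemma identity_sector_weight : w = n%:R^-1.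
Proof.
have n_neq0 : n%:R != 0 :> algC.
  by rewrite pnatr_eq0 -lt0n (leq_ltn_trans _ (ltn_ord o)).
have : Proj sector e i0 1%:M = 1%:M.
  by apply/Proj_in_sector/identity_sector; exists 1; rewrite scale1r.
rewrite Proj_identity_sectorE mxtrace1 => /matrixP /(_ o o).
rewrite !mxE eqxx mulr1 /= => wn.
by apply: (mulIf n_neq0); rewrite wn mulVf.
Qed.

Lemma Proj_identity_sector X : Proj sector e i0 X = (n%:R^-1 * \tr X) *: 1%:M.
Proof. by rewrite Proj_identity_sectorE identity_sector_weight. Qed.

Lemma Twirl_identity_sector X : Twirl sector e i0 X = n%:R^-1 *: X.
Proof.
rewrite /Twirl -identity_sector_weight /w scaler_suml; apply: eq_bigr => j sj.
rewrite {1 2}(identity_sector_scalar sj) adjZ adj1 -scalemxAl mul1mx.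
by rewrite -scalemxAr mulmx1 scalerA normCK.
Qed.

End IdentitySector.

End Decomposition.

Section Projector.
Variables (n : nat) (P : 'M[algC]_n).
Hypothesis proj : orth_projector P.

Lemma mxtrace_proj : \tr P = (\rank P)%:R.
Proof. by case: proj => PP _; apply: mxtrace_idem. Qed.

Lemma hs_proj : hs P P = (\rank P)%:R.
Proof. by case: proj => PP aP; rewrite /hs aP PP mxtrace_proj. Qed.

Lemma hs_proj_sandwich Y : hs P (P *m Y *m P) = hs P Y.
Proof.
by case: proj => PP aP; rewrite /hs aP !mulmxA PP mxtrace_mulC mulmxA PP.
Qed.

Lemma hs_sandwich Y : hs (P *m Y *m P) (P *m Y *m P) = hs P (adj Y *m P *m Y).
Proof.
case: proj => PP aP; rewrite /hs !adjM aP !mulmxA -(mulmxA _ P P) PP.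
by rewrite mxtrace_mulC !mulmxA PP.
Qed.

End Projector.

Section QuantumCode.
Variables (n : nat) (I J : finType) (sector : J -> I).
Variables (e : J -> 'M[algC]_n) (P : 'M[algC]_n).
Hypotheses (decomp : is_decomposition sector e) (proj : orth_projector P).

Local Notation A i := (Aenum sector e i P P).
Local Notation B i := (Benum sector e i P P).
Local Notation K := (\rank P)%:R.

Lemma Aenum_proj i :
  A i = \sum_(j | sector j == i) `|hs P (P *m e j *m P)| ^+ 2.
Proof.
by rewrite Aenum_diag; apply: eq_bigr => j _; rewrite hs_proj_sandwich.
Qed.

Lemma Benum_proj i :
  B i = \sum_(j | sector j == i) hs (P *m e j *m P) (P *m e j *m P).
Proof.
by rewrite /Benum /Twirl hs_sumr; apply: eq_bigr => j _; rewrite hs_sandwich.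
Qed.

Lemma Aenum_leif_Benum i :
  A i <= K * B i ?= iff [forall (j | sector j == i),
    `|hs P (P *m e j *m P)| ^+ 2 == K * hs (P *m e j *m P) (P *m e j *m P)].
Proof.
rewrite Aenum_proj Benum_proj mulr_sumr -hs_proj //.
by apply: leif_sum => j _; apply/leif_eq/hs_Cauchy_Schwarz.
Qed.

Lemma Aenum_eq_Benum i : A i = K * B i <-> detects P (in_sector sector e i).
Proof.
have [_ eqAB] := Aenum_leif_Benum i; rewrite detects_sectorP.
split=> [/eqP | scal].
  rewrite eqAB -hs_proj // => /forall_inP CS j sj.
  by apply/hs_Cauchy_Schwarz_sandwichP/eqP/CS.
apply/eqP; rewrite eqAB -hs_proj //; apply/forall_inP => j sj.
by apply/eqP/hs_Cauchy_Schwarz_sandwichP/scal.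
Qed.

Lemma Aenum_Benum_identity_sector i0 :
  (forall E, in_sector sector e i0 E <-> exists c : algC, E = c *: 1%:M) ->
  A i0 = (\rank P ^ 2)%:R / n%:R /\ B i0 = K / n%:R.
Proof.
move=> identity_sector; have [n0 | n_gt0] := posnP n.
  by subst n; rewrite /Aenum /Benum !hsE !big_ord0 invr0 !mulr0.
pose o := Ordinal n_gt0.
rewrite /Aenum /Benum (Proj_identity_sector decomp identity_sector o).
rewrite (Twirl_identity_sector decomp identity_sector o) !hsZr hs1r hs_proj //.
by rewrite mxtrace_proj // conjC_nat natrX; split; ring.
Qed.

End QuantumCode.

Theorem mainTheorem4 (n : nat) (I J : finType) (sector : J -> I)
    (e : J -> 'M[algC]_n) (P : 'M[algC]_n) :
  is_decomposition sector e ->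
  orth_projector P ->
  let K := \rank P in
  [/\ (forall i, 0 <= Aenum sector e i P P),
      \sum_i Aenum sector e i P P = K%:R,
      \sum_i Benum sector e i P P = (K ^ 2)%:R,
      (forall i0 : I,
         (forall E, in_sector sector e i0 E <-> exists c : algC, E = c *: 1%:M) ->
         Aenum sector e i0 P P = (K ^ 2)%:R / n%:R /\
         Benum sector e i0 P P = K%:R / n%:R)
    & (forall i,
         Aenum sector e i P P <= K%:R * Benum sector e i P P /\
         (Aenum sector e i P P = K%:R * Benum sector e i P P <->
          detects P (in_sector sector e i)))].
Proof.
move=> decomp proj K; split.
- by move=> i; apply: Aenum_ge0.
- by rewrite sum_Aenum // hs_proj.
- by rewrite sum_Benum // mxtrace_proj // normr_nat natrX.
- by move=> i0; apply: Aenum_Benum_identity_sector.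
- move=> i; split; first by case: (Aenum_leif_Benum sector e proj i).
  exact: Aenum_eq_Benum.
Qed.
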